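(* Let $A,B\in\mathrm{SL}_2\mathbb{Z}$ be noncommuting, well oriented, with $2\le\mathrm{tr}(A)<\mathrm{tr}(B)$ and $\mathrm{tr}(AB)>\mathrm{tr}(B^2)$, and assume $[(ab^2)^2]\le[(ab)^3]-2$. Fix a word $w$ and let $k\ge1$ be such that the length of $wab^2(ab)^kab^2$ is a multiple of $6$. If $w$ is empty, or is a product of copies of $ab$ and $ab^2$, then $[wab^2(ab)^kab^2]<[w(ab)^{k+3}]$.
   Context: Words are finite strings over $\{a,b\}$; $\phi$ is the monoid homomorphism with $\phi(a)=A,\phi(b)=B$, and $[w]=\mathrm{tr}(\phi(w))$. Fixed points are for the Möbius action on $\partial\mathcal{H}=\mathbb{P}^1\mathbb{R}$; $\alpha^\pm$ ($\beta^\pm$) are the attracting/repelling fixed points of $A$ ($B$), both equal to the unique fixed point if parabolic. With $\partial\mathcal{H}$ cyclically ordered and $[\alpha,\beta]$ the closed counterclockwise interval from $\alpha$ to $\beta$, let $I^+=\{\alpha^+\}$ if $\alpha^+=\beta^+$, and otherwise the one of $[\alpha^+,\beta^+],[\beta^+,\alpha^+]$ mapped into itself by both $A$ and $B$ (if it exists); define $I^-$ likewise with $A^{-1},B^{-1},\alpha^-,\beta^-$. The pair is coherently oriented if both exist, and well oriented if $A,B$ is coherently oriented but $A,B^{-1}$ is not. *)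

From mathcomp Require Import all_boot all_order all_algebra.
From mathcomp Require Import Rstruct.
Set Implicit Arguments. Unset Strict Implicit. Unset Printing Implicit Defensive.
Import Order.TTheory GRing.Theory Num.Theory.
Local Open Scope ring_scope.

Definition la : bool := true.
Definition lb : bool := false.
Definition word := seq bool.

Definition phi (A B : 'M[int]_2) (w : word) : 'M[int]_2 :=
  foldr (fun l M => (if l then A else B) *m M) 1%:M w.

Definition trw (A B : 'M[int]_2) (w : word) : int := \tr (phi A B w).

Definition w_ab : word := [:: la; lb].
Definition w_ab2 : word := [:: la; lb; lb].
Definition w_abk (k : nat) : word := flatten (nseq k w_ab).

Definition is_ab_ab2_product (w : word) : Prop :=
  exists ws : seq word,
    all (fun u => (u == w_ab) || (u == w_ab2)) ws /\ w = flatten ws.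

(* P^1 R = R u {oo}, with None = oo *)
Definition P1 (R : realFieldType) := option R.

Definition mob (R : realFieldType) (M : 'M[R]_2) (p : P1 R) : P1 R :=
  match p with
  | None => if M 1 0 == 0 then None else Some (M 0 0 / M 1 0)
  | Some x => if M 1 0 * x + M 1 1 == 0 then None
              else Some ((M 0 0 * x + M 0 1) / (M 1 0 * x + M 1 1))
  end.

(* eigenvalue of M on the line represented by p:
   M (x,1)^T = (M 1 0 * x + M 1 1) (x,1)^T when x is fixed,
   M (1,0)^T = M 0 0 (1,0)^T when oo is fixed. *)
Definition multiplier (R : realFieldType) (M : 'M[R]_2) (p : P1 R) : R :=
  match p with
  | None => M 0 0
  | Some x => M 1 0 * x + M 1 1
  end.

Definition is_fixed (R : realFieldType) (M : 'M[R]_2) (p : P1 R) : Prop :=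
  mob M p = p.

(* attracting fixed point (for det M = 1): the fixed point whose eigenvalue
   has modulus >= 1 (i.e. derivative 1/lambda^2 of modulus <= 1);
   for a parabolic M the unique fixed point is both attracting and repelling *)
Definition is_attr (R : realFieldType) (M : 'M[R]_2) (p : P1 R) : Prop :=
  is_fixed M p /\ 1 <= `|multiplier M p|.
Definition is_rep (R : realFieldType) (M : 'M[R]_2) (p : P1 R) : Prop :=
  is_fixed M p /\ `|multiplier M p| <= 1.

(* linear order on R u {oo} with oo as the largest element; the induced
   cyclic order is the counterclockwise orientation of the boundary *)
Definition ltP1 (R : realFieldType) (x y : P1 R) : bool :=
  match x, y with
  | Some a, Some b => a < b
  | Some _, None => true
  | None, _ => false
  end.

(* strict cyclic order: going counterclockwise from a one meets x before b *)
Definition cyc (R : realFieldType) (a x b : P1 R) : Prop :=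
  (ltP1 a x && ltP1 x b) \/ (ltP1 x b && ltP1 b a) \/ (ltP1 b a && ltP1 a x).

Definition ccw_int (R : realFieldType) (a b : P1 R) (x : P1 R) : Prop :=
  x = a \/ x = b \/ cyc a x b.

Definition maps_into_itself (R : realFieldType) (M : 'M[R]_2)
  (I : P1 R -> Prop) : Prop := forall x, I x -> I (mob M x).

Definition interval_exists (R : realFieldType) (M N : 'M[R]_2)
  (p q : P1 R) : Prop :=
  p = q \/
  (maps_into_itself M (ccw_int p q) /\ maps_into_itself N (ccw_int p q)) \/
  (maps_into_itself M (ccw_int q p) /\ maps_into_itself N (ccw_int q p)).

Definition coherently_oriented (R : realFieldType) (A B : 'M[R]_2) : Prop :=
  exists ap bp am bm : P1 R,
    is_attr A ap /\ is_attr B bp /\ is_rep A am /\ is_rep B bm /\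
    interval_exists A B ap bp /\
    interval_exists (invmx A) (invmx B) am bm.

Definition well_oriented (R : realFieldType) (A B : 'M[R]_2) : Prop :=
  coherently_oriented A B /\ ~ coherently_oriented A (invmx B).

Definition toR (M : 'M[int]_2) : 'M[Rdefinitions.R]_2 :=
  map_mx (fun z : int => z%:~R) M.

From mathcomp Require Import all_boot all_order all_algebra.
From mathcomp Require Import Rstruct.
From mathcomp Require Import ring lra.
Set Implicit Arguments. Unset Strict Implicit. Unset Printing Implicit Defensive.
Import Order.TTheory GRing.Theory Num.Theory.
Local Open Scope ring_scope.

(* Every trace of a word in [A], [B] is a polynomial in [x = tr A], [y = tr B],
   [z = tr AB], so the inequality can be checked on any pair of SL2(R) with
   these traces.  When [2 <= x < y] and [y^2 - 2 < z] such a pair has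
   nonnegative entries: [A0 = [[1, a], [b, 1 + ab]]], [B0 = [[1 + d, 1], [d, 1]]].
   The difference of the two traces is [tr (W D_k)] with [W] the matrix of [w] and
   [D_k = (AB)^(k+3) - AB^2 (AB)^k AB^2].  Since [D_(k+2) = z D_(k+1) - D_k]
   and [z > 2], it is positive for all [k] once it is positive at [k = 0] and
   does not decrease from [k = 0] to [k = 1].  For [w] empty or [w = ab] these
   are polynomial inequalities in [x], [y], [z] and
   [g = [(ab)^3] - [(ab^2)^2] - 2 >= 0].  Otherwise [tr (W D_k)] is
   [tr (U B D_k AB)] with [U] nonnegative, and [B D_0 AB], [B (D_1 - D_0) AB]
   are explicit combinations of [BAB], [A + B - x] and [1] with nonnegative
   entries for the pair [A0], [B0]. *)

Section Matrix22.
Variable R : comNzRingType.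
Implicit Types M N : 'M[R]_2.

Lemma ord2_lift0 : lift (0 : 'I_2) (0 : 'I_1) = 1.
Proof. exact: val_inj. Qed.

Lemma mulmx22E M N i j : (M *m N) i j = M i 0 * N 0 j + M i 1 * N 1 j.
Proof. by rewrite !mxE !big_ord_recl big_ord0 addr0 ord2_lift0. Qed.

Lemma mxtrace22 M : \tr M = M 0 0 + M 1 1.
Proof. by rewrite /mxtrace !big_ord_recl big_ord0 addr0 ord2_lift0. Qed.

Lemma det22 M : \det M = M 0 0 * M 1 1 - M 0 1 * M 1 0.
Proof.
rewrite (expand_det_row M 0) !big_ord_recl big_ord0 addr0 /cofactor !det_mx11.
rewrite !mxE /= ord2_lift0 (_ : lift 1 0 = 0); last exact: val_inj.
by rewrite /bump /= expr0 expr1 mul1r mulN1r mulrN.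
Qed.

Lemma matrix22P M N :
  M 0 0 = N 0 0 -> M 0 1 = N 0 1 -> M 1 0 = N 1 0 -> M 1 1 = N 1 1 -> M = N.
Proof.
move=> e00 e01 e10 e11; apply/matrixP.
by move=> [[|[|//]] ?] [[|[|//]] ?]; [move: e00|move: e01|move: e10|move: e11];
  congr (_ = _); congr (_ _ _); apply: val_inj.
Qed.

Lemma addmx22E M N i j : (M + N) i j = M i j + N i j. Proof. by rewrite mxE. Qed.
Lemma oppmx22E M i j : (- M) i j = - M i j. Proof. by rewrite mxE. Qed.
Lemma scalemx22E (c : R) M i j : (c *: M) i j = c * M i j. Proof. by rewrite mxE. Qed.
Lemma scalar_mx22E (c : R) (i j : 'I_2) : (c%:M : 'M[R]_2) i j = c *+ (i == j).
Proof. by rewrite mxE. Qed.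

Definition mx22 (p q r s : R) : 'M[R]_2 :=
  \matrix_(i, j) if i == 0 then (if j == 0 then p else q) else (if j == 0 then r else s).

Lemma mx22_00 p q r s : mx22 p q r s 0 0 = p. Proof. by rewrite mxE. Qed.
Lemma mx22_01 p q r s : mx22 p q r s 0 1 = q. Proof. by rewrite mxE. Qed.
Lemma mx22_10 p q r s : mx22 p q r s 1 0 = r. Proof. by rewrite mxE. Qed.
Lemma mx22_11 p q r s : mx22 p q r s 1 1 = s. Proof. by rewrite mxE. Qed.

End Matrix22.

Ltac mx22_entries :=
  rewrite -?mulmxE ?(addmx22E, oppmx22E, scalemx22E, scalar_mx22E, mulmx22E,
                     mx22_00, mx22_01, mx22_10, mx22_11) /= ?mulr0n ?mulr1n.
Ltac mx22_ring := apply: matrix22P; mx22_entries; ring.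

Lemma mxtrace_mulrC (R : comNzRingType) (M N : 'M[R]_2) : \tr (M * N) = \tr (N * M).
Proof. by rewrite -!mulmxE mxtrace_mulC. Qed.

Lemma mx22_CayleyHamilton (R : comNzRingType) (M : 'M[R]_2) :
  M * M = \tr M *: M - (\det M)%:M.
Proof. rewrite mxtrace22 det22; mx22_ring. Qed.

Lemma mxtrace_sqr_det1 (R : comNzRingType) (M : 'M[R]_2) :
  \det M = 1 -> \tr (M * M) = \tr M ^+ 2 - 2.
Proof. by move=> dM; rewrite mx22_CayleyHamilton dM raddfB /= mxtraceZ mxtrace1 expr2. Qed.

Section WordMatrices.
Variables (R : comNzRingType) (A B : 'M[R]_2).

Definition phiR (w : word) : 'M[R]_2 :=
  foldr (fun l M => (if l then A else B) * M) 1 w.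

Lemma phiR_cat u v : phiR (u ++ v) = phiR u * phiR v.
Proof. by elim: u => [|l u IH] /=; rewrite ?mul1r // IH mulrA. Qed.

Lemma phiR_b : phiR [:: lb] = B.
Proof. exact: mulr1. Qed.

Lemma phiR_cons_b w : phiR (lb :: w) = B * phiR w.
Proof. by []. Qed.

Lemma phiR_ab : phiR w_ab = A * B.
Proof. by rewrite /= mulr1. Qed.

Lemma phiR_ab2 : phiR w_ab2 = A * B * B.
Proof. by rewrite /= mulr1 mulrA. Qed.

Lemma phiR_abk k : phiR (w_abk k) = (A * B) ^+ k.
Proof. by elim: k => [|k IH] //; rewrite exprS -IH /= mulrA. Qed.

Lemma phiR_rcons_b v : phiR (rcons v lb) = phiR v * B.
Proof. by rewrite -cats1 phiR_cat phiR_b. Qed.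

Definition gap_mx k : 'M[R]_2 :=
  (A * B) ^+ (k + 3) - A * B * B * (A * B) ^+ k * (A * B * B).

Lemma phiR_gap w k :
  phiR (w ++ w_abk (k + 3)) - phiR (w ++ w_ab2 ++ w_abk k ++ w_ab2) = phiR w * gap_mx k.
Proof. by rewrite !phiR_cat !phiR_abk phiR_ab2 mulrBr -!mulrA. Qed.

Lemma mxtrace_phiR_gap w k :
  \tr (phiR w * gap_mx k) =
  \tr (phiR (w ++ w_abk (k + 3))) - \tr (phiR (w ++ w_ab2 ++ w_abk k ++ w_ab2)).
Proof. by rewrite -phiR_gap raddfB. Qed.

Lemma phiR_b_gap_ab k :
  phiR (lb :: w_abk (k + 4)) - phiR (lb :: w_ab2 ++ w_abk k ++ w_ab2 ++ w_ab) =
  B * gap_mx k * (A * B).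
Proof.
rewrite !phiR_cons_b !phiR_cat !phiR_abk phiR_ab2 phiR_ab.
by rewrite mulrBr mulrBl -!mulrA -exprSr addnS.
Qed.

Lemma gap_mx_rec k :
  \det (A * B) = 1 -> gap_mx k.+2 = \tr (A * B) *: gap_mx k.+1 - gap_mx k.
Proof.
set P := A * B; move=> dP.
have powP n : P ^+ n.+2 = \tr P *: P ^+ n.+1 - P ^+ n.
  by rewrite exprSr [P ^+ n.+1]exprSr -mulrA mx22_CayleyHamilton dP
    mulrBr -scalerAr -exprSr -mulmxE mulmx1.
rewrite /gap_mx !addSn !powP; set Q := A * B * B.
rewrite mulrBr mulrBl -!scalerAr -!scalerAl.
move: (\tr P) (P ^+ _) (P ^+ (k + 3)) (Q * _ * Q) (Q * P ^+ k * Q) => c p q r s.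
by rewrite scalerBr !opprB addrACA [RHS]addrACA [- q + _]addrC.
Qed.

Lemma mxtrace_gap_rec L M k : \det (A * B) = 1 ->
  \tr (L * gap_mx k.+2 * M) =
  \tr (A * B) * \tr (L * gap_mx k.+1 * M) - \tr (L * gap_mx k * M).
Proof.
move=> dP; rewrite gap_mx_rec // mulrBr mulrBl -scalerAr -scalerAl.
by rewrite raddfB /= mxtraceZ.
Qed.

End WordMatrices.

Section TraceCoordinates.
Variable R : comNzRingType.
Local Notation coord := (R * R * R * R)%type.
Implicit Types (A B : 'M[R]_2) (c d : coord).

(* Every word matrix lies in the span of [1], [A], [B], [AB]: by Cayley-Hamilton
   for [A], [B] and [AB], left multiplication by [A] or [B] acts on coordinates
   through [coordA] and [coordB]. *)
Definition lcomb A B c : 'M[R]_2 :=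
  let: (c0, c1, c2, c3) := c in c0%:M + c1 *: A + c2 *: B + c3 *: (A * B).

Definition coordA (x dA : R) c : coord :=
  let: (c0, c1, c2, c3) := c in (- (c1 * dA), c0 + c1 * x, - (c3 * dA), c2 + c3 * x).

Definition coordB (x y z dB : R) c : coord :=
  let: (c0, c1, c2, c3) := c in
  (c1 * (z - x * y) - c2 * dB - c3 * x * dB, c1 * y + c3 * dB,
   c0 + c1 * x + c2 * y + c3 * z, - c1).

Fixpoint word_coord (x y z dA dB : R) (w : word) : coord :=
  match w with
  | [::] => (1, 0, 0, 0)
  | l :: w' => (if l then coordA x dA else coordB x y z dB) (word_coord x y z dA dB w')
  end.

Definition coord_trace (x y z : R) c : R :=
  let: (c0, c1, c2, c3) := c in c0 * 2 + c1 * x + c2 * y + c3 * z.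

Lemma mul_lcombA A B c : A * lcomb A B c = lcomb A B (coordA (\tr A) (\det A) c).
Proof. case: c => [[[c0 c1] c2] c3]; rewrite /= mxtrace22 det22; mx22_ring. Qed.

Lemma mul_lcombB A B c :
  B * lcomb A B c = lcomb A B (coordB (\tr A) (\tr B) (\tr (A * B)) (\det B) c).
Proof. case: c => [[[c0 c1] c2] c3]; rewrite /= !mxtrace22 det22; mx22_ring. Qed.

Lemma phiR_lcomb A B w :
  phiR A B w = lcomb A B (word_coord (\tr A) (\tr B) (\tr (A * B)) (\det A) (\det B) w).
Proof.
elim: w => [|[] w IH] /=; last 2 first.
- by rewrite IH mul_lcombA.
- by rewrite IH mul_lcombB.
by mx22_ring.
Qed.

Lemma mxtrace_lcomb A B c : \tr (lcomb A B c) = coord_trace (\tr A) (\tr B) (\tr (A * B)) c.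
Proof. case: c => [[[c0 c1] c2] c3]; rewrite /= !mxtrace22; mx22_entries; ring. Qed.

Lemma mxtrace_phiR A B w :
  \tr (phiR A B w) = coord_trace (\tr A) (\tr B) (\tr (A * B))
                       (word_coord (\tr A) (\tr B) (\tr (A * B)) (\det A) (\det B) w).
Proof. by rewrite phiR_lcomb mxtrace_lcomb. Qed.

Lemma mxtrace_phiR_eq A B A' B' w :
  \det A = \det A' -> \det B = \det B' ->
  \tr A = \tr A' -> \tr B = \tr B' -> \tr (A * B) = \tr (A' * B') ->
  \tr (phiR A B w) = \tr (phiR A' B' w).
Proof. by move=> dA dB tA tB tAB; rewrite !mxtrace_phiR dA dB tA tB tAB. Qed.

Definition coord_add c d : coord :=
  let: (c0, c1, c2, c3) := c in let: (d0, d1, d2, d3) := d in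
  (c0 + d0, c1 + d1, c2 + d2, c3 + d3).
Definition coord_sub c d : coord :=
  let: (c0, c1, c2, c3) := c in let: (d0, d1, d2, d3) := d in
  (c0 - d0, c1 - d1, c2 - d2, c3 - d3).
Definition coord_scale (a : R) c : coord :=
  let: (c0, c1, c2, c3) := c in (a * c0, a * c1, a * c2, a * c3).

Lemma lcombD A B c d : lcomb A B (coord_add c d) = lcomb A B c + lcomb A B d.
Proof. case: c d => [[[c0 c1] c2] c3] [[[d0 d1] d2] d3]; mx22_ring. Qed.

Lemma lcombB A B c d : lcomb A B (coord_sub c d) = lcomb A B c - lcomb A B d.
Proof. case: c d => [[[c0 c1] c2] c3] [[[d0 d1] d2] d3]; mx22_ring. Qed.

Lemma lcombZ A B a c : lcomb A B (coord_scale a c) = a *: lcomb A B c.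
Proof. case: c => [[[c0 c1] c2] c3]; mx22_ring. Qed.

End TraceCoordinates.

(* [[(ab)^3] - [(ab^2)^2] - 2] in trace coordinates, see [mxtrace_gap0]. *)
Definition ab3_excess (R : comNzRingType) (x y z : R) : R :=
  z ^+ 3 - 3 * z - (y * z - x) ^+ 2.

Section TraceIdentities.
Variables (R : comNzRingType) (A B : 'M[R]_2) (x y z : R).
Hypotheses (dA : \det A = 1) (dB : \det B = 1).
Hypotheses (trA : \tr A = x) (trB : \tr B = y) (trAB : \tr (A * B) = z).
Local Notation g := (ab3_excess x y z).

Ltac trace_poly :=
  rewrite ?mxtrace_phiR_gap !mxtrace_phiR dA dB trA trB trAB /= /ab3_excess; ring.

Lemma mxtrace_gap0 : \tr (gap_mx A B 0) = g + 2.
Proof. by rewrite -[gap_mx A B 0]mul1r -[1]/(phiR A B [::]); trace_poly. Qed.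

Lemma mxtrace_gap1 :
  z * (\tr (gap_mx A B 1) - \tr (gap_mx A B 0)) =
  (z ^+ 2 - z - 1) * g + z ^+ 2 - 3 * z + x * y * z - x ^+ 2.
Proof.
by rewrite -[gap_mx A B 1]mul1r -[gap_mx A B 0]mul1r -[1]/(phiR A B [::]); trace_poly.
Qed.

Lemma mxtrace_ab_gap0 :
  z * \tr (A * B * gap_mx A B 0) = (z ^+ 2 - 1) * g + z ^+ 2 - z + x * y * z - x ^+ 2.
Proof. by rewrite -(@phiR_ab _ A B); trace_poly. Qed.

Lemma mxtrace_ab_gap1 :
  z ^+ 2 * (\tr (A * B * gap_mx A B 1) - \tr (A * B * gap_mx A B 0)) =
  (z ^+ 4 - z ^+ 3 - 2 * z ^+ 2 + z + 1) * g
  + (3 * z + 3 * z ^+ 2 - 3 * z ^+ 3 - 2 * x * y * z - x * y * z ^+ 2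
     + 2 * x * y * z ^+ 3 + x ^+ 2 + x ^+ 2 * z - 2 * x ^+ 2 * z ^+ 2).
Proof. by rewrite -(@phiR_ab _ A B); trace_poly. Qed.

Lemma lcomb_AB_sub_x : A + B - x%:M = lcomb A B (- x, 1, 1, 0).
Proof. mx22_ring. Qed.

Lemma lcomb_scalar (t : R) : t%:M = lcomb A B (t, 0, 0, 0).
Proof. mx22_ring. Qed.

Lemma phiR_bab : phiR A B [:: lb; la; lb] = B * A * B.
Proof. by rewrite /= mulr1 mulrA. Qed.

Ltac coord_ring :=
  rewrite -!phiR_b_gap_ab -phiR_bab lcomb_AB_sub_x lcomb_scalar !phiR_lcomb
          dA dB trA trB trAB -!lcombB -!lcombZ -!lcombD;
  apply: congr1; rewrite /= /ab3_excess; congr (_, _, _, _); ring.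

Lemma b_gap0_ab :
  B * gap_mx A B 0 * (A * B) =
  g *: (B * A * B) + (z + 1) *: (A + B - x%:M) + (y * z - x)%:M.
Proof. by coord_ring. Qed.

Lemma b_gap1_ab :
  (z - 1) *: (B * gap_mx A B 1 * (A * B) - B * gap_mx A B 0 * (A * B)) =
  (z * (z - 2) * g - (y - x) * (y * z - x)) *: (B * A * B)
  + (z * (z - 2) * (z + 1)) *: (A + B - x%:M)
  + (z * (z - 2) * (y * z - x) + (y - x))%:M.
Proof. by coord_ring. Qed.

End TraceIdentities.

Lemma recurrence_gt0 (R : realFieldType) (f : nat -> R) (z : R) :
  2 <= z -> (forall k, f k.+2 = z * f k.+1 - f k) -> 0 < f 0 -> f 0 <= f 1 ->
  forall k, 0 < f k.
Proof.
move=> z2 rec f0 f01.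
suff mono k : f 0 <= f k <= f k.+1 by move=> k; case/andP: (mono k) => /(lt_le_trans f0).
elim: k => [|k /andP [f0k fk]]; first by rewrite lexx.
have fk1 : 0 < f k.+1 by apply: lt_le_trans (le_trans f0k fk).
by rewrite (le_trans f0k fk) rec; nra.
Qed.

Section TraceInequalities.
Variables (R : realFieldType) (x y z : R).
Local Notation g := (ab3_excess x y z).

Lemma y_lt_z : 2 <= x -> x < y -> y ^+ 2 - 2 < z -> y < z.
Proof.
move=> x2 xy yz; have : 0 < (y - 2) * (y + 1) by apply: mulr_gt0; lra.
lra.
Qed.

Lemma nil_step_ge0 : 2 <= x -> x < y -> y ^+ 2 - 2 < z -> 0 <= g ->
  0 <= (z ^+ 2 - z - 1) * g + z ^+ 2 - 3 * z + x * y * z - x ^+ 2.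
Proof.
move=> x2 xy yz g0; have lt_yz := y_lt_z x2 xy yz.
have : 0 <= (z ^+ 2 - z - 1) * g by apply: mulr_ge0 => //; nra.
have : 0 <= (y - 2) * (x * z) by apply: mulr_ge0; nra.
nra.
Qed.

Lemma ab_start_gt0 : 2 <= x -> x < y -> y ^+ 2 - 2 < z -> 0 <= g ->
  0 < (z ^+ 2 - 1) * g + z ^+ 2 - z + x * y * z - x ^+ 2.
Proof.
move=> x2 xy yz g0; have lt_yz := y_lt_z x2 xy yz.
have : 0 <= (z ^+ 2 - 1) * g by apply: mulr_ge0 => //; nra.
have : 0 <= (y - 2) * (x * z) by apply: mulr_ge0; nra.
nra.
Qed.

Lemma ab_step_ge0 : 2 <= x -> x < y -> y ^+ 2 - 2 < z -> 0 <= g ->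
  0 <= (z ^+ 4 - z ^+ 3 - 2 * z ^+ 2 + z + 1) * g
       + (3 * z + 3 * z ^+ 2 - 3 * z ^+ 3 - 2 * x * y * z - x * y * z ^+ 2
          + 2 * x * y * z ^+ 3 + x ^+ 2 + x ^+ 2 * z - 2 * x ^+ 2 * z ^+ 2).
Proof.
move=> x2 xy yz g0; have lt_yz := y_lt_z x2 xy yz.
have z2 : 2 < z by lra.
have : 0 <= (z ^+ 4 - z ^+ 3 - 2 * z ^+ 2 + z + 1) * g.
  apply: mulr_ge0 => //.
  have -> : z ^+ 4 - z ^+ 3 - 2 * z ^+ 2 + z + 1 = z ^+ 2 * ((z - 2) * (z + 1)) + (z + 1)
    by ring.
  have : 0 <= z ^+ 2 * ((z - 2) * (z + 1)) by rewrite mulr_ge0 ?sqr_ge0 ?mulr_ge0 //; lra.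
  lra.
set T := z * (2 * x * y - 3) - (x * y + 2 * x ^+ 2 - 3).
have xy4 : 4 <= x * y by nra.
have T1 : y * (2 * x * y - 3) <= z * (2 * x * y - 3) by apply: ler_wpM2r; lra.
have T2 : 2 * x * y - x ^+ 2 - 3 <= 2 * T.
  have : 0 <= (y - x) * (4 * x - 6) by apply: mulr_ge0; lra.
  have : 0 <= 4 * x * y * (y - 2) by apply: mulr_ge0; lra.
  rewrite /T; nra.
have T0 : 0 <= T by nra.
have zT : 2 * T <= z * T by apply: ler_wpM2r; lra.
have -> : 3 * z + 3 * z ^+ 2 - 3 * z ^+ 3 - 2 * x * y * z - x * y * z ^+ 2
          + 2 * x * y * z ^+ 3 + x ^+ 2 + x ^+ 2 * z - 2 * x ^+ 2 * z ^+ 2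
        = z * (z * T - (2 * x * y - x ^+ 2 - 3)) + x ^+ 2 by rewrite /T; ring.
have : 0 <= z * (z * T - (2 * x * y - x ^+ 2 - 3)) by apply: mulr_ge0; lra.
have : 0 <= x ^+ 2 by apply: sqr_ge0.
lra.
Qed.

Lemma sandwich_gap_le : 2 <= x -> x < y -> y ^+ 2 - 2 < z ->
  (y - x) * (y * z - x) <= (z - 2) * (z + 1).
Proof.
move=> x2 xy yz; have lt_yz := y_lt_z x2 xy yz.
have : (y - x) * (y * z - x) <= (y - 2) * (y * z - 2).
  have : 0 <= y * z - x by nra.
  have : y * z - x <= y * z - 2 by lra.
  nra.
have : y ^+ 2 * z <= (z + 2) * z by nra.
have : 0 <= z * (2 * y - 3) + 2 * y - 6 by nra.
nra.
Qed.

Local Notation p := (z * (z - 2) * g - (y - x) * (y * z - x)).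
Local Notation q := (z * (z - 2) * (z + 1)).
Local Notation s := (z * (z - 2) * (y * z - x) + (y - x)).

Lemma sandwich_coeffs_ge0 : 2 <= x -> x < y -> y ^+ 2 - 2 < z -> 0 <= g ->
  [/\ 0 <= p + q, 0 <= p * z + q, 0 <= p * (z - 1) + s
    & 0 <= p * ((y - 1) * z - x + 1) + q * (y - x) + s].
Proof.
move=> x2 xy yz g0; have lt_yz := y_lt_z x2 xy yz.
have gap := sandwich_gap_le x2 xy yz.
have z2 : 2 < z by lra.
have zg : 0 <= z * (z - 2) * g by apply: mulr_ge0 => //; nra.
have tz : z <= y * z - x.
  have : 0 <= (y - 2) * z by apply: mulr_ge0; lra.
  nra.
split.
- have : 0 <= (z - 1) * ((z - 2) * (z + 1)) by rewrite !mulr_ge0 //; lra.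
  nra.
- have -> : p * z + q = z * (z * (z - 2) * g + ((z - 2) * (z + 1) - (y - x) * (y * z - x)))
    by ring.
  apply: mulr_ge0; first lra.
  nra.
- have le1 : (z - 1) * (y - x) <= z * (z - 2) by nra.
  have : 0 <= (z - 1) * (z * (z - 2) * g) by apply: mulr_ge0; lra.
  have : (z - 1) * (y - x) * (y * z - x) <= z * (z - 2) * (y * z - x)
    by apply: ler_wpM2r; lra.
  nra.
- set t := y * z - x in gap tz *.
  have -> : p * ((y - 1) * z - x + 1) + q * (y - x) + s
          = z * (z - 2) * g * (t - z + 1) + (y - x) * (g + (z - 1) * (t - z) + 1)
            + z * (z - 2) * t by rewrite /ab3_excess /t; ring.
  have : 0 <= z * (z - 2) * g * (t - z + 1) by apply: mulr_ge0; lra.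
  have : 0 <= (y - x) * (g + (z - 1) * (t - z) + 1).
    apply: mulr_ge0; first lra.
    have : 0 <= (z - 1) * (t - z) by apply: mulr_ge0; lra.
    lra.
  have : 0 <= z * (z - 2) * t by apply: mulr_ge0; nra.
  lra.
Qed.

End TraceInequalities.

Lemma det_mul_det1 (R : comNzRingType) (A B : 'M[R]_2) :
  \det A = 1 -> \det B = 1 -> \det (A * B) = 1.
Proof. by move=> dA dB; rewrite -mulmxE det_mulmx dA dB mulr1. Qed.

Lemma mxtrace_gap_short_gt0 (R : realFieldType) (A B : 'M[R]_2) (x y z : R) w k :
  \det A = 1 -> \det B = 1 -> \tr A = x -> \tr B = y -> \tr (A * B) = z ->
  2 <= x -> x < y -> y ^+ 2 - 2 < z -> 0 <= ab3_excess x y z ->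
  w = [::] \/ w = w_ab ->
  0 < \tr (phiR A B w * gap_mx A B k).
Proof.
move=> dA dB trA trB trAB x2 xy yz g0 hw.
have z2 : 2 < z by have := y_lt_z x2 xy yz; lra.
have z0 : 0 < z by lra.
pose f k := \tr (phiR A B w * gap_mx A B k * 1).
suff : 0 < f k by rewrite /f mulr1.
apply: (@recurrence_gt0 _ f z (ltW z2)) => [j||].
- by rewrite /f mxtrace_gap_rec ?det_mul_det1 // trAB.
- rewrite /f mulr1; case: hw => ->.
    by rewrite mul1r (mxtrace_gap0 dA dB trA trB trAB); lra.
  rewrite phiR_ab -(pmulr_rgt0 _ z0) (mxtrace_ab_gap0 dA dB trA trB trAB).
  exact: ab_start_gt0.
- rewrite /f !mulr1 -subr_ge0; case: hw => ->.
    rewrite !mul1r -(pmulr_rge0 _ z0) (mxtrace_gap1 dA dB trA trB trAB).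
    exact: nil_step_ge0.
  rewrite phiR_ab -(pmulr_rge0 _ (exprn_gt0 2 z0)) (mxtrace_ab_gap1 dA dB trA trB trAB).
  exact: ab_step_ge0.
Qed.

Section PositiveMatrices.
Variable R : realFieldType.
Implicit Types U M N : 'M[R]_2.

Definition nonneg_mx M := [/\ 0 <= M 0 0, 0 <= M 0 1, 0 <= M 1 0 & 0 <= M 1 1].

(* The bound [1 <= M 1 1] survives products and makes [\tr (U * M)] positive
   as soon as [M 1 1] is. *)
Definition pos_mx M := [/\ 0 <= M 0 0, 0 <= M 0 1, 0 <= M 1 0 & 1 <= M 1 1].

Lemma pos_mx1 : pos_mx 1.
Proof. by rewrite /pos_mx !mxE /= ler01 lexx. Qed.

Lemma pos_mxM M N : pos_mx M -> pos_mx N -> pos_mx (M * N).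
Proof.
case=> m00 m01 m10 m11 [n00 n01 n10 n11]; rewrite /pos_mx -mulmxE !mulmx22E.
split; try by rewrite addr_ge0 // mulr_ge0 //; lra.
have : 0 <= M 1 0 * N 0 1 by apply: mulr_ge0.
have : 1 <= M 1 1 * N 1 1 by rewrite -[1]mulr1 ler_pM // ler01.
lra.
Qed.

Lemma pos_mx_phiR A B w : pos_mx A -> pos_mx B -> pos_mx (phiR A B w).
Proof.
move=> pA pB; elim: w => [|[] w IH] /=; first exact: pos_mx1.
  exact: pos_mxM.
exact: pos_mxM.
Qed.

Lemma mxtrace_pos_mx_ge U M : pos_mx U -> nonneg_mx M -> U 1 1 * M 1 1 <= \tr (U * M).
Proof.
case=> u00 u01 u10 u11 [m00 m01 m10 m11]; rewrite -mulmxE mxtrace22 !mulmx22E.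
have : 0 <= U 0 0 * M 0 0 by apply: mulr_ge0.
have : 0 <= U 0 1 * M 1 0 by apply: mulr_ge0.
have : 0 <= U 1 0 * M 0 1 by apply: mulr_ge0.
lra.
Qed.

Lemma mxtrace_pos_mx_gt0 U M : pos_mx U -> nonneg_mx M -> 0 < M 1 1 -> 0 < \tr (U * M).
Proof.
move=> pU nM M11; apply: lt_le_trans (mxtrace_pos_mx_ge pU nM).
by case: pU => _ _ _ u11; rewrite mulr_gt0 // (lt_le_trans ltr01).
Qed.

Lemma mxtrace_pos_mx_ge0 U M : pos_mx U -> nonneg_mx M -> 0 <= \tr (U * M).
Proof.
move=> pU nM; apply: le_trans (mxtrace_pos_mx_ge pU nM).
by case: pU nM => _ _ _ u11 [_ _ _ m11]; rewrite mulr_ge0 // (le_trans ler01).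
Qed.

End PositiveMatrices.

Definition frameA (R : comNzRingType) (a b : R) : 'M[R]_2 := mx22 1 a b (1 + a * b).
Definition frameB (R : comNzRingType) (d : R) : 'M[R]_2 := mx22 (1 + d) 1 d 1.

Lemma det_frameA (R : comNzRingType) (a b : R) : \det (frameA a b) = 1.
Proof. by rewrite det22; mx22_entries; ring. Qed.

Lemma det_frameB (R : comNzRingType) (d : R) : \det (frameB d) = 1.
Proof. by rewrite det22; mx22_entries; ring. Qed.

Lemma mxtrace_frameA (R : comNzRingType) (a b : R) : \tr (frameA a b) = 2 + a * b.
Proof. by rewrite mxtrace22; mx22_entries; ring. Qed.

Lemma mxtrace_frameB (R : comNzRingType) (d : R) : \tr (frameB d) = 2 + d.
Proof. by rewrite mxtrace22; mx22_entries; ring. Qed.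

Lemma mxtrace_frameAB (R : comNzRingType) (a b d : R) :
  \tr (frameA a b * frameB d) = 2 + (a + 1) * (b + d).
Proof. by rewrite mxtrace22; mx22_entries; ring. Qed.

Lemma pos_frameA (R : realFieldType) (a b : R) : 0 <= a -> 0 <= b -> pos_mx (frameA a b).
Proof.
move=> a0 b0; rewrite /pos_mx; mx22_entries.
by rewrite a0 b0 ler01 lerDl mulr_ge0.
Qed.

Lemma pos_frameB (R : realFieldType) (d : R) : 0 <= d -> pos_mx (frameB d).
Proof. by move=> d0; rewrite /pos_mx; mx22_entries; split; lra. Qed.

(* Solve [a b = x - 2] and [a d + b = z - x - y + 2 =: Z] with [d = y - 2]:
   [a] and [b / d] are the roots of [d T^2 - Z T + (x - 2)], real because
   [Z >= y (y - 2)] by [y^2 - 2 < z]. *)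
Lemma frame_exists (R : rcfType) (x y z : R) :
  2 <= x -> x < y -> y ^+ 2 - 2 < z ->
  exists a b d : R, [/\ 0 <= a, 0 <= b & 0 <= d] /\
                    [/\ x = 2 + a * b, y = 2 + d & z = 2 + (a + 1) * (b + d)].
Proof.
move=> x2 xy yz.
set d := y - 2; set Z := z - x - y + 2; set D := Z ^+ 2 - 4 * d * (x - 2).
have d0 : 0 < d by rewrite /d; lra.
have yy : 0 <= y * (y - 2) by apply: mulr_ge0; lra.
have Zy : y * (y - 2) <= Z by rewrite /Z; nra.
have D0 : 0 <= D.
  have : (y * (y - 2)) ^+ 2 <= Z ^+ 2 by nra.
  have : 4 * d * (x - 2) <= (y * (y - 2)) ^+ 2.
    have : 0 <= (y - 2) * (y ^+ 2 - 4) by apply: mulr_ge0; nra.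
    have : 0 <= (y - 2) * (y - x) by apply: mulr_ge0; lra.
    rewrite /d; nra.
  rewrite /D; lra.
set s := Num.sqrt D.
have s0 : 0 <= s by apply: sqrtr_ge0.
have s2 : s ^+ 2 = D by apply: sqr_sqrtr.
have sZ : s <= Z.
  have : s ^+ 2 <= Z ^+ 2.
    rewrite s2 /D; have : 0 <= 4 * d * (x - 2) by apply: mulr_ge0; lra.
    lra.
  nra.
have dn0 : d != 0 by rewrite gt_eqF.
set a := (Z - s) / (2 * d); set b := (Z + s) / 2.
have ab : a * b = x - 2.
  have -> : a * b = (Z ^+ 2 - s ^+ 2) / (4 * d) by rewrite /a /b; field.
  by rewrite s2 /D; field.
have ad : a * d = (Z - s) / 2 by rewrite /a; field.
exists a, b, d; split; split.
- by apply: divr_ge0; lra.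
- by apply: divr_ge0; lra.
- by lra.
- by rewrite ab; ring.
- by rewrite /d; ring.
- have -> : (a + 1) * (b + d) = a * b + a * d + b + d by ring.
  by rewrite ab ad /b /Z /d; field.
Qed.

Lemma nonneg_mxZ (R : realFieldType) (c : R) (M : 'M[R]_2) :
  0 < c -> nonneg_mx (c *: M) -> nonneg_mx M.
Proof.
move=> c0 [m00 m01 m10 m11].
by split; rewrite -(pmulr_rge0 _ c0) -scalemx22E.
Qed.

Lemma mxtrace_comb_gt0 (R : realFieldType) (U P E : 'M[R]_2) (c e t : R) :
  pos_mx U -> pos_mx P -> nonneg_mx E -> 0 <= c -> 0 <= e -> 0 < t ->
  0 < \tr (U * (c *: P + e *: E + t%:M)).
Proof.
move=> pU [p00 p01 p10 p11] [e00 e01 e10 e11] c0 e0 t0.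
apply: mxtrace_pos_mx_gt0 => //; last first.
  mx22_entries; have := mulr_ge0 c0 (le_trans ler01 p11).
  by have := mulr_ge0 e0 e11; lra.
have p11' := le_trans ler01 p11.
by split; mx22_entries; rewrite ?addr0 ?addr_ge0 ?mulr_ge0 ?(ltW t0).
Qed.

Definition ab_or_ab2 (u : word) : bool := (u == w_ab) || (u == w_ab2).

Lemma flatten_ab_or_ab2_rcons ws :
  all ab_or_ab2 ws -> ws != [::] -> exists v, flatten ws = rcons v lb.
Proof.
elim: ws => [|u ws IH] //= /andP [uP wsP] _.
have [->|ws_n0] := eqVneq ws [::].
  by case/orP: uP => /eqP ->; [exists [:: la] | exists [:: la; lb]].
by have [v ->] := IH wsP ws_n0; exists (u ++ v); rewrite rcons_cat.
Qed.

(* A nonempty product of [ab]'s and [ab^2]'s other than [ab] is [ab V b] or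
   [ab^2 V b]; rotating [ab] to the end of the trace exposes
   [B * gap_mx A B k * (A * B)]. *)
Lemma mxtrace_gap_sandwich (R : realFieldType) (A B : 'M[R]_2) ws :
  pos_mx A -> pos_mx B -> all ab_or_ab2 ws -> ws != [::] -> ws != [:: w_ab] ->
  exists2 U, pos_mx U &
    forall k, \tr (phiR A B (flatten ws) * gap_mx A B k) =
              \tr (U * (B * gap_mx A B k * (A * B))).
Proof.
move=> pA pB; case: ws => [|u ws] //= /andP [uP wsP] _ ws_ab.
rewrite phiR_cat; have [ws0|ws_n0] := eqVneq ws [::].
  move: uP ws_ab; rewrite ws0 /ab_or_ab2 => /orP [/eqP -> //|/eqP -> _].
  exists 1; first exact: pos_mx1.
  by move=> k; rewrite mulr1 mul1r phiR_ab2 -[A * B * B * _]mulrA mxtrace_mulrC.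
have [v ->] := flatten_ab_or_ab2_rcons wsP ws_n0; rewrite phiR_rcons_b.
case/orP: uP => /eqP ->; [exists (phiR A B v) | exists (B * phiR A B v)].
- exact: pos_mx_phiR.
- by move=> k; rewrite phiR_ab -!mulrA mulrA mxtrace_mulrC -!mulrA.
- exact/pos_mxM/pos_mx_phiR.
- by move=> k; rewrite phiR_ab2 -!mulrA mulrA mxtrace_mulrC -!mulrA.
Qed.

Section FramePair.
Variables (R : realFieldType) (a b d x y z : R).
Hypotheses (a_ge0 : 0 <= a) (b_ge0 : 0 <= b) (d_ge0 : 0 <= d).
Hypotheses (ex : x = 2 + a * b) (ey : y = 2 + d) (ez : z = 2 + (a + 1) * (b + d)).
Hypotheses (x_lt_y : x < y) (trB2_lt_z : y ^+ 2 - 2 < z) (g_ge0 : 0 <= ab3_excess x y z).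
Local Notation A0 := (frameA a b).
Local Notation B0 := (frameB d).
Local Notation M k := (B0 * gap_mx A0 B0 k * (A0 * B0)).

(* [lra] and [nra] ignore section hypotheses: proofs below copy the ones they
   need into the local context. *)

Lemma frame_x_ge2 : 2 <= x.
Proof. by rewrite ex lerDl mulr_ge0. Qed.

Lemma frame_z_gt2 : 2 < z.
Proof.
have x2 := frame_x_ge2; have xy := x_lt_y; have := y_lt_z x2 xy trB2_lt_z.
lra.
Qed.

Lemma mxtrace_frameA_x : \tr A0 = x. Proof. by rewrite mxtrace_frameA ex. Qed.
Lemma mxtrace_frameB_y : \tr B0 = y. Proof. by rewrite mxtrace_frameB ey. Qed.
Lemma mxtrace_frameAB_z : \tr (A0 * B0) = z. Proof. by rewrite mxtrace_frameAB ez. Qed.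

Lemma frameBAB : B0 * A0 * B0 = mx22 ((y - 1) * z - x + 1) (a + z) (b + d * z) (z - 1).
Proof. rewrite ex ey ez; mx22_ring. Qed.

Lemma frameAB_sub_x : A0 + B0 - x%:M = mx22 (y - x) (1 + a) (d + b) 0.
Proof. rewrite ex ey; mx22_ring. Qed.

Lemma pos_frameA0 : pos_mx A0. Proof. exact: pos_frameA. Qed.
Lemma pos_frameB0 : pos_mx B0. Proof. exact: pos_frameB. Qed.

Lemma mxtrace_frame_M0_gt0 U : pos_mx U -> 0 < \tr (U * M 0).
Proof.
move=> pU; rewrite (b_gap0_ab (det_frameA a b) (det_frameB d) mxtrace_frameA_x
                    mxtrace_frameB_y mxtrace_frameAB_z).
have x2 := frame_x_ge2; have xy := x_lt_y; have yz := y_lt_z x2 xy trB2_lt_z.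
apply: mxtrace_comb_gt0 => //.
- by rewrite -phiR_bab; apply/pos_mx_phiR/pos_frameB0/pos_frameA0.
- by rewrite frameAB_sub_x; split; mx22_entries; rewrite ?subr_ge0 ?(ltW xy) ?addr_ge0.
- by lra.
- by nra.
Qed.

Lemma mxtrace_frame_M1_ge U : pos_mx U -> \tr (U * M 0) <= \tr (U * M 1).
Proof.
move=> pU; rewrite -subr_ge0 -raddfB -mulrBr; apply: mxtrace_pos_mx_ge0 => //.
have x2 := frame_x_ge2; have z2 := frame_z_gt2.
have a0 := a_ge0; have b0 := b_ge0; have d0 := d_ge0.
have [n1 n2 n3 n4] := sandwich_coeffs_ge0 x2 x_lt_y trB2_lt_z g_ge0.
apply: (@nonneg_mxZ _ (z - 1)); first lra.
rewrite (b_gap1_ab (det_frameA a b) (det_frameB d) mxtrace_frameA_x mxtrace_frameB_y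
                   mxtrace_frameAB_z) frameBAB frameAB_sub_x.
split; mx22_entries; rewrite ?addr0.
- lra.
- have := mulr_ge0 a0 n1; lra.
- have := mulr_ge0 b0 n1; have := mulr_ge0 d0 n2; lra.
- lra.
Qed.

Lemma mxtrace_frame_M_gt0 U k : pos_mx U -> 0 < \tr (U * M k).
Proof.
move=> pU; pose f k := \tr (U * B0 * gap_mx A0 B0 k * (A0 * B0)).
have fE j : \tr (U * M j) = f j by rewrite /f !mulrA.
rewrite fE; apply: (@recurrence_gt0 _ f z (ltW frame_z_gt2)) => [j||].
- by rewrite /f mxtrace_gap_rec ?mxtrace_frameAB_z // det_mul_det1 ?det_frameA ?det_frameB.
- by rewrite -fE mxtrace_frame_M0_gt0.
- by rewrite -!fE mxtrace_frame_M1_ge.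
Qed.

Lemma mxtrace_frame_lt ws k : all ab_or_ab2 ws ->
  \tr (phiR A0 B0 (flatten ws ++ w_ab2 ++ w_abk k ++ w_ab2)) <
  \tr (phiR A0 B0 (flatten ws ++ w_abk (k + 3))).
Proof.
move=> wsP; rewrite -subr_gt0 -mxtrace_phiR_gap.
have [short|] := boolP ((ws == [::]) || (ws == [:: w_ab])).
  apply: (mxtrace_gap_short_gt0 k (det_frameA a b) (det_frameB d) mxtrace_frameA_x
            mxtrace_frameB_y mxtrace_frameAB_z frame_x_ge2 x_lt_y trB2_lt_z g_ge0).
  by case/orP: short => /eqP ->; [left | right].
rewrite negb_or => /andP [ws_n0 ws_nab].
have [U pU ->] := mxtrace_gap_sandwich pos_frameA0 pos_frameB0 wsP ws_n0 ws_nab.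
exact: mxtrace_frame_M_gt0.
Qed.

End FramePair.

Lemma mxtrace_ab2_abk_ab2_lt (R : rcfType) (A B : 'M[R]_2) ws k :
  \det A = 1 -> \det B = 1 -> 2 <= \tr A -> \tr A < \tr B -> \tr (B * B) < \tr (A * B) ->
  \tr (phiR A B (w_ab2 ++ w_ab2)) <= \tr (phiR A B (w_ab ++ w_ab ++ w_ab)) - 2 ->
  all ab_or_ab2 ws ->
  \tr (phiR A B (flatten ws ++ w_ab2 ++ w_abk k ++ w_ab2)) <
  \tr (phiR A B (flatten ws ++ w_abk (k + 3))).
Proof.
move=> dA dB x2 xy BB_lt hg wsP.
have yz : \tr B ^+ 2 - 2 < \tr (A * B) by rewrite -mxtrace_sqr_det1.
have g0 : 0 <= ab3_excess (\tr A) (\tr B) (\tr (A * B)).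
  have := mxtrace_gap0 dA dB erefl erefl erefl.
  rewrite -[gap_mx A B 0]mul1r -[1]/(phiR A B [::]) mxtrace_phiR_gap.
  rewrite -[[::] ++ _ ++ _]/(w_ab2 ++ w_ab2) -[[::] ++ _]/(w_ab ++ w_ab ++ w_ab).
  lra.
have [a [b [d [[a0 b0 d0] [ex ey ez]]]]] := frame_exists x2 xy yz.
have trE w : \tr (phiR A B w) = \tr (phiR (frameA a b) (frameB d) w).
  by apply: mxtrace_phiR_eq;
    rewrite ?det_frameA ?det_frameB ?mxtrace_frameA ?mxtrace_frameB ?mxtrace_frameAB.
by rewrite !trE (mxtrace_frame_lt a0 b0 d0 ex ey ez xy yz g0).
Qed.

Lemma toRM (M N : 'M[int]_2) : toR (M *m N) = toR M * toR N.
Proof. by rewrite /toR map_mxM mulmxE. Qed.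

Lemma mxtrace_toR (M : 'M[int]_2) : \tr (toR M) = (\tr M)%:~R.
Proof. exact: trace_map_mx. Qed.

Lemma det_toR (M : 'M[int]_2) : \det (toR M) = (\det M)%:~R.
Proof. exact: det_map_mx. Qed.

Lemma phiR_toR (A B : 'M[int]_2) w : phiR (toR A) (toR B) w = toR (phi A B w).
Proof.
elim: w => [|l w IH] /=; first by rewrite /toR map_mx1.
by case: l; rewrite IH -toRM.
Qed.

Lemma trw_toR (A B : 'M[int]_2) w : (trw A B w)%:~R = \tr (phiR (toR A) (toR B) w).
Proof. by rewrite phiR_toR mxtrace_toR. Qed.

Theorem lemma7p2 (A B : 'M[int]_2) (w : word) (k : nat) :
  \det A = 1 -> \det B = 1 ->
  A *m B != B *m A ->
  well_oriented (toR A) (toR B) ->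
  2 <= \tr A -> \tr A < \tr B ->
  \tr (B *m B) < \tr (A *m B) ->
  trw A B (w_ab2 ++ w_ab2) <= trw A B (w_ab ++ w_ab ++ w_ab) - 2 ->
  (1 <= k)%N ->
  (6 %| size (w ++ w_ab2 ++ w_abk k ++ w_ab2))%N ->
  w = [::] \/ is_ab_ab2_product w ->
  trw A B (w ++ w_ab2 ++ w_abk k ++ w_ab2) < trw A B (w ++ w_abk (k + 3)).
Proof.
move=> dA dB _ _ x2 xy BB_lt hg _ _ hw.
have [ws [wsP ->]] : exists ws, all ab_or_ab2 ws /\ w = flatten ws.
  by case: hw => [->|//]; exists [::].
rewrite -(ltr_int Rdefinitions.R) !trw_toR.
apply: mxtrace_ab2_abk_ab2_lt => //; rewrite ?det_toR ?mxtrace_toR -?toRM ?mxtrace_toR.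
- by rewrite dA.
- by rewrite dB.
- by rewrite (ler_int _ 2).
- by rewrite ltr_int.
- by rewrite ltr_int.
- by rewrite -!trw_toR -(rmorphB _ _ 2) ler_int.
Qed.
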